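(* Let $\Gamma\cong\mathbb{Z}^n$ act freely, properly discontinuously and cocompactly by isometries on a length space $(X,d)$, let $x_0\in X$, and let $D\ge\operatorname{diam}(\Gamma\backslash X)$. Let $\Sigma_D=\{\gamma\in\Gamma\setminus\{e\}: d(\gamma x_0,x_0)\le 3D\}$ (a generating set of $\Gamma$), let $\Sigma_n=\{\gamma_1,\dots,\gamma_n\}\subset\Sigma_D$ be $n$ linearly independent elements, and $\mathcal Z=\langle\Sigma_n\rangle$. Let $S=\{s_0=e,s_1,\dots,s_d\}$ be a set of representatives of the cosets of $\Gamma/\mathcal Z$, each of minimal $d_{\Sigma_D}$-word length in its coset, and let $\widehat\Sigma_n=\{s_i\sigma s_j^{-1}: s_i,s_j\in S,\ \sigma\in\Sigma_D,\ s_i\sigma s_j^{-1}\in\mathcal Z\setminus\{e\}\}$. Then for all $\gamma\in\mathcal Z$, $$|\gamma|_{\widehat\Sigma_n}\le|\gamma|_{\Sigma_D}\le(2[\Gamma:\mathcal Z]+1)\,|\gamma|_{\widehat\Sigma_n}.$$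
   Context: For a generating set $\Sigma$ of a group, $|\gamma|_\Sigma$ denotes the word length of $\gamma$ with respect to $\Sigma$ and $d_\Sigma$ the associated word metric; $|\gamma|_{\widehat\Sigma_n}$ is the word length in $\mathcal Z$ with respect to $\widehat\Sigma_n$ (which generates $\mathcal Z$). *)

From HB Require Import structures.
From mathcomp Require Import all_boot all_order all_algebra.
From mathcomp Require Import reals.
Set Implicit Arguments. Unset Strict Implicit. Unset Printing Implicit Defensive.
Import Order.TTheory GRing.Theory Num.Theory.
Local Open Scope ring_scope.

Section Defs.
Variable R : realType.
Variable X : Type.
Variable d : X -> X -> R.

Definition is_metric : Prop :=
  [/\ forall x y, 0 <= d x y,
      forall x y, d x y = 0 <-> x = y,
      forall x y, d x y = d y x &
      forall x y z, d x z <= d x y + d y z].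

Definition curve_continuous (c : R -> X) : Prop :=
  forall t, 0 <= t <= 1 -> forall e : R, 0 < e -> exists2 del : R, 0 < del &
    forall s, 0 <= s <= 1 -> `|s - t| < del -> d (c s) (c t) < e.

Definition curve_length_le (c : R -> X) (L : R) : Prop :=
  forall ts : seq R, sorted <=%R ts -> (forall t, t \in ts -> 0 <= t <= 1) ->
    \sum_(i < (size ts).-1) d (c (nth 0 ts i)) (c (nth 0 ts i.+1)) <= L.

Definition length_space : Prop :=
  is_metric /\
  forall x y (e : R), 0 < e -> exists c : R -> X,
    [/\ curve_continuous c, c 0 = x, c 1 = y & curve_length_le c (d x y + e)].

(** sequential compactness of K (equivalent to compactness in a metric space) *)
Definition seq_compact (K : X -> Prop) : Prop :=
  forall u : nat -> X, (forall k, K (u k)) ->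
    exists phi : nat -> nat, exists2 y, K y &
      (forall k, (phi k < phi k.+1)%N) /\
      forall e : R, 0 < e -> exists N, forall k, (N <= k)%N -> d (u (phi k)) y < e.

Variable n : nat.
Notation G := 'rV[int]_n.
Variable act : G -> X -> X.

Definition isometric_action : Prop :=
  [/\ forall x, act 0 x = x,
      forall g h x, act (g + h) x = act g (act h x) &
      forall g x y, d (act g x) (act g y) = d x y].

Definition free_action : Prop := forall g x, act g x = x -> g = 0.

(** properly discontinuous: every point has a ball B(x,r) such that only
    finitely many g satisfy g B(x,r) /\ B(x,r) <> empty *)
Definition properly_discontinuous : Prop :=
  forall x, exists2 r : R, 0 < r & exists fin : seq G,
    forall g, (exists y, d y x < r /\ d (act g y) x < r) -> g \in fin.

Definition cocompact : Prop :=
  exists K : X -> Prop, seq_compact K /\ forall x, exists g, K (act g x).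

(** D >= diam(G\X) = sup_{x,y} inf_g d(x, g y) *)
Definition quotient_diam_le (D : R) : Prop :=
  forall x y (e : R), 0 < e -> exists g, d x (act g y) <= D + e.

End Defs.

Section Words.
Variable n : nat.
Notation G := 'rV[int]_n.

(** |g|_P <= k : g is a product (sum) of at most k letters from P \cup P^{-1} *)
Definition wordlen_le (P : G -> Prop) (g : G) (k : nat) : Prop :=
  exists w : seq G, [/\ (size w <= k)%N,
    forall x, x \in w -> P x \/ P (- x) & \sum_(x <- w) x = g].

Definition in_span (gam : 'I_n -> G) (v : G) : Prop :=
  exists c : 'I_n -> int, v = \sum_i c i *: gam i.

Definition lin_indep (gam : 'I_n -> G) : Prop :=
  forall c : 'I_n -> int, \sum_i c i *: gam i = 0 -> forall i, c i = 0.

Definition coset_reps (gam : 'I_n -> G) (S : seq G) : Prop :=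
  [/\ uniq S,
      forall s t, s \in S -> t \in S -> in_span gam (s - t) -> s = t &
      forall g, exists2 s, s \in S & in_span gam (g - s)].
End Words.

From mathcomp Require Import all_boot all_order all_algebra.
From mathcomp Require Import classical_sets reals.
From mathcomp Require Import lra zify.
From Stdlib Require Import ClassicalEpsilon.
Import Order.TTheory GRing.Theory Num.Theory.
Set Implicit Arguments. Unset Strict Implicit.
Local Open Scope ring_scope.

(* Read a Sigma_D-word for g as a walk through the cosets of Z, each letter x taking the
   representative t of the current coset to the representative t' of t + x. Replacing x by the
   Schreier generator t + x - t' telescopes, so |g|_hat <= |g|_D. Conversely a shortest word
   reaching a coset never revisits a coset, so each representative, being of minimal length in
   its coset, has Sigma_D-length at most [Gamma : Z]; hence every Schreier generator has
   Sigma_D-length at most 2 [Gamma : Z] + 1. This needs Sigma_D to generate Gamma, which holds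
   because X is a length space whose quotient has diameter at most D. *)

Section WordLength.
Variables (n : nat) (P : 'rV[int]_n -> Prop).

Lemma wordlen_leW g k k' : (k <= k')%N -> wordlen_le P g k -> wordlen_le P g k'.
Proof. by move=> le_kk' [w [szw Pw <-]]; exists w; split=> //; apply: leq_trans le_kk'. Qed.

Lemma wordlen_le0 : wordlen_le P 0 0.
Proof. by exists [::]; split=> //; rewrite big_nil. Qed.

Lemma wordlen_leD a b k k' :
  wordlen_le P a k -> wordlen_le P b k' -> wordlen_le P (a + b) (k + k').
Proof.
move=> [w [szw Pw <-]] [w' [szw' Pw' <-]]; exists (w ++ w'); split.
- by rewrite size_cat leq_add.
- by move=> x; rewrite mem_cat => /orP[/Pw|/Pw'].
- by rewrite big_cat.
Qed.

Lemma wordlen_leN a k : wordlen_le P a k -> wordlen_le P (- a) k.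
Proof.
move=> [w [szw Pw <-]]; exists (map -%R w); split.
- by rewrite size_map.
- by move=> _ /mapP[y /Pw Py ->]; rewrite opprK; tauto.
- by rewrite big_map sumrN.
Qed.

Lemma wordlen_le1 x : P x \/ P (- x) -> wordlen_le P x 1.
Proof.
by move=> Px; exists [:: x]; split; rewrite ?big_seq1 // => y; rewrite inE => /eqP->.
Qed.

Lemma wordlen_le_sum m (w : seq 'rV[int]_n) :
  (forall x, x \in w -> wordlen_le P x m) ->
  wordlen_le P (\sum_(x <- w) x) (m * size w).
Proof.
elim: w => [|x w IHw] Pw; first by rewrite big_nil muln0; apply: wordlen_le0.
rewrite big_cons mulnS; apply: wordlen_leD; first by apply: Pw; rewrite mem_head.
by apply: IHw => y wy; apply: Pw; rewrite inE wy orbT.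
Qed.

Lemma wordlen_le_comp (Q : 'rV[int]_n -> Prop) m g k :
  (forall x, Q x -> wordlen_le P x m) ->
  wordlen_le Q g k -> wordlen_le P g (m * k).
Proof.
move=> QP [w [szw Qw <-]]; apply: (@wordlen_leW _ (m * size w)).
  by rewrite leq_mul2l szw orbT.
by apply: wordlen_le_sum => x /Qw[/QP //|/QP/wordlen_leN]; rewrite opprK.
Qed.

End WordLength.

Section Span.
Variables (n : nat) (gam : 'I_n -> 'rV[int]_n).

Lemma in_spanD a b : in_span gam a -> in_span gam b -> in_span gam (a + b).
Proof.
move=> [c ->] [c' ->]; exists (fun i => c i + c' i).
by rewrite -big_split; apply: eq_bigr => i _; rewrite scalerDl.
Qed.

Lemma in_spanN a : in_span gam a -> in_span gam (- a).
Proof.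
move=> [c ->]; exists (fun i => - c i).
by rewrite -sumrN; apply: eq_bigr => i _; rewrite scaleNr.
Qed.

Lemma in_spanB a b : in_span gam a -> in_span gam b -> in_span gam (a - b).
Proof. by move=> ha hb; apply/in_spanD/in_spanN. Qed.

End Span.

Section Cosets.
Variables (n : nat) (gam : 'I_n -> 'rV[int]_n) (S : seq 'rV[int]_n).
Hypothesis S_reps : coset_reps gam S.

Definition coset_rep (g : 'rV[int]_n) : 'rV[int]_n :=
  epsilon (inhabits 0) (fun s => s \in S /\ in_span gam (g - s)).

Lemma coset_repP g : coset_rep g \in S /\ in_span gam (g - coset_rep g).
Proof.
case: S_reps => _ _ /(_ g)[s Ss sg].
by apply: (epsilon_spec _ (fun s => s \in S /\ in_span gam (g - s))); exists s.
Qed.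

Lemma eq_coset_rep_span a b : coset_rep a = coset_rep b -> in_span gam (a - b).
Proof.
move=> eq_ab; have [_ spa] := coset_repP a; have [_ spb] := coset_repP b.
by have := in_spanB spa spb; rewrite eq_ab opprB addrA subrK.
Qed.

(* Two prefixes of a word longer than [size S] lie in the same coset: cut out the loop
   between them. *)
Lemma exists_shorter_word_in_coset (w : seq 'rV[int]_n) : (size S < size w)%N ->
  exists w', [/\ (size w' < size w)%N, {subset w' <= w} &
                 in_span gam (\sum_(x <- w') x - \sum_(x <- w) x)].
Proof.
move=> ltSw.
pose reps := [seq coset_rep (\sum_(x <- take i w) x) | i <- iota 0 (size w).+1].
have : ~~ uniq reps.
  apply/negP => /uniq_leq_size le_reps.
  have : (size reps <= size S)%N.
    by apply: le_reps => _ /mapP[i _ ->]; exact: (coset_repP _).1.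
  by rewrite size_map size_iota leqNgt ltnW.
move=> /(uniqPn 0)[i [j [lt_ij]]]; rewrite size_map size_iota => lt_jw.
have lt_iw : (i < (size w).+1)%N by apply: ltn_trans lt_jw.
rewrite !(nth_map 0%N) ?size_iota // !nth_iota // !add0n => /eq_coset_rep_span sp.
exists (take i w ++ drop j w); split.
- rewrite size_cat size_takel ?size_drop; last by rewrite -ltnS.
  move: lt_ij lt_jw; move: (size w) => m; lia.
- by move=> x; rewrite mem_cat => /orP[/mem_take|/mem_drop].
- rewrite -[in X in _ - X](cat_take_drop j w) !big_cat /=.
  by rewrite opprD addrA addrAC addrK.
Qed.

Variable P : 'rV[int]_n -> Prop.

Lemma wordlen_le_size_coset_rep s k : s \in S ->
  (forall g, in_span gam (g - s) -> forall k, wordlen_le P g k -> wordlen_le P s k) ->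
  wordlen_le P s k -> wordlen_le P s (size S).
Proof.
move=> Ss S_min; elim/ltn_ind: k => k IHk [w [szw Pw sum_w]].
have [le_wS|lt_Sw] := leqP (size w) (size S); first by exists w.
have [w' [lt_w'w sub_w' sp]] := exists_shorter_word_in_coset lt_Sw.
apply: (IHk (size w')); first exact: leq_trans lt_w'w szw.
apply: (S_min (\sum_(x <- w') x)); first by rewrite -sum_w.
by exists w'; split=> // x /sub_w'/Pw.
Qed.

End Cosets.

Section Curves.
Variables (R : realType) (X : Type) (d : X -> X -> R).
Hypothesis d_sym : forall x y, d x y = d y x.

(* Q holds on c at the supremum of the times where it holds, and slightly beyond it unless
   that supremum is [1]. *)
Lemma curve_propagate (c : R -> X) (Q : X -> Prop) (r : R) :
  curve_continuous d c -> 0 < r ->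
  (forall y y', Q y -> d y y' < r -> Q y') -> Q (c 0) -> Q (c 1).
Proof.
move=> c_cont r_gt0 Q_step Qc0.
pose A := [set t : R | 0 <= t <= 1 /\ Q (c t)]%classic.
have A0 : A 0 by split; rewrite ?lexx ?ler01.
have supA : has_sup A by split; [exists 0 | exists 1 => t [/andP[]]].
set s := sup A.
have s_ge0 : 0 <= s by apply: sup_upper_bound.
have s_le1 : s <= 1 by apply: ge_sup; [exists 0 | move=> t [/andP[]]].
have [del del_gt0 c_near_s] := c_cont s ltac:(by rewrite s_ge0 s_le1) r r_gt0.
have [t [t01 Qct] lt_st] := sup_adherent del_gt0 supA.
rewrite -/s in lt_st.
have le_ts : t <= s by apply: sup_upper_bound.
have Qcs : Q (c s).
  apply: Q_step Qct _; apply: c_near_s => //.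
  by rewrite ler0_norm ?subr_le0 // opprB; lra.
suff -> : 1 = s by [].
apply/eqP; rewrite eq_le s_le1 andbT leNgt; apply/negP => lt_s1.
pose u := Num.min 1 (s + del / 2).
have u_le1 : u <= 1 by rewrite ge_min lexx.
have lt_su : s < u by rewrite lt_min lt_s1 /=; lra.
have Au : A u.
  split; first by rewrite u_le1 andbT; lra.
  apply: Q_step Qcs _; rewrite d_sym; apply: c_near_s; first by rewrite u_le1 andbT; lra.
  have : u <= s + del / 2 by rewrite ge_min lexx orbT.
  by rewrite gtr0_norm ?subr_gt0 //; lra.
by have := sup_upper_bound supA Au; rewrite -/s; lra.
Qed.

End Curves.

Section OrbitGenerators.
Variables (R : realType) (X : Type) (d : X -> X -> R) (n : nat).
Variables (act : 'rV[int]_n -> X -> X) (x0 : X) (D : R).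

Definition sigmaD (g : 'rV[int]_n) : Prop := g != 0 /\ d (act g x0) x0 <= 3 * D.

Lemma sigmaD_gt0 g : is_metric d -> free_action act -> sigmaD g -> 0 < D.
Proof.
move=> [d_ge0 d_eq0 _ _] act_free [g_neq0 dg]; rewrite ltNge; apply/negP => D_le0.
have : d (act g x0) x0 = 0 by apply/eqP; rewrite eq_le d_ge0 andbT (le_trans dg) //; lra.
by move/d_eq0/act_free/eqP; rewrite (negbTE g_neq0).
Qed.

Lemma wordlen_sigmaD_step g g' k : is_metric d -> isometric_action d act ->
  d (act g x0) (act g' x0) <= 3 * D ->
  wordlen_le sigmaD g k -> wordlen_le sigmaD g' k.+1.
Proof.
move=> [_ _ d_sym _] [_ actD act_iso] dgg' gk.
rewrite -(subrK g g') addrC -[k.+1]addn1; apply: wordlen_leD => //.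
have [->|nz] := eqVneq (g' - g) 0; first exact: wordlen_leW (wordlen_le0 _).
by apply: wordlen_le1; left; split; rewrite // -(act_iso g) -actD addrC subrK d_sym.
Qed.

(* Along a path from [x0] to [g x0], every point lies within [5D/4] of some orbit point, and
   points less than [D/2] apart have such orbit points within [5D/4 + D/2 + 5D/4 = 3D]. *)
Lemma sigmaD_generates : length_space d -> isometric_action d act ->
  quotient_diam_le d act D -> 0 < D -> forall g, exists k, wordlen_le sigmaD g k.
Proof.
move=> [d_metric d_length] act_isom diamD D_gt0 g.
have [_ d_eq0 d_sym d_tri] := d_metric; have [act0 _ _] := act_isom.
pose Q y := exists h, d y (act h x0) <= D + D / 4 /\ exists k, wordlen_le sigmaD h k.
have Q_step y y' : Q y -> d y y' < D / 2 -> Q y'.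
  move=> [h [dyh [k hk]]] dyy'.
  have [h' dy'h'] := diamD y' x0 (D / 4) ltac:(by rewrite divr_gt0).
  exists h'; split=> //; exists k.+1; apply: wordlen_sigmaD_step hk => //.
  apply: (le_trans (d_tri _ y _)); rewrite d_sym.
  apply: (le_trans (lerD (lexx _) (d_tri _ y' _))); lra.
have [c [c_cont c0 c1 _]] := d_length x0 (act g x0) 1 ltr01.
have : Q (c 1).
  apply: (curve_propagate d_sym c_cont _ Q_step); first by rewrite divr_gt0.
  exists 0; rewrite c0 act0 ((d_eq0 _ _).2 erefl); split; first lra.
  by exists 0%N; apply: wordlen_le0.
rewrite c1 => -[h [dgh [k hk]]]; exists k.+1; apply: wordlen_sigmaD_step hk => //.
by rewrite d_sym; lra.
Qed.

End OrbitGenerators.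

Section Schreier.
Variables (n : nat) (gam : 'I_n -> 'rV[int]_n) (S : seq 'rV[int]_n).
Hypothesis S_reps : coset_reps gam S.
Variable P : 'rV[int]_n -> Prop.

Definition schreier_gens (v : 'rV[int]_n) : Prop :=
  exists si, exists sj, exists sig,
    [/\ si \in S, sj \in S, P sig & v = si + sig - sj] /\
    (in_span gam v /\ v != 0).

Lemma wordlen_schreier_letter t t' x : t \in S -> t' \in S -> P x \/ P (- x) ->
  in_span gam (t + x - t') -> wordlen_le schreier_gens (t + x - t') 1.
Proof.
move=> St St' Px sp; have [->|nz] := eqVneq (t + x - t') 0.
  exact: wordlen_leW (wordlen_le0 _).
apply: wordlen_le1; case: Px => [Px|PNx]; first by left; exists t, t', x.
have opp_eq : - (t + x - t') = t' + - x - t.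
  by rewrite !opprD opprK addrC addrA addrAC.
right; exists t', t, (- x); rewrite opp_eq -opp_eq oppr_eq0.
by split=> //; split=> //; apply: in_spanN.
Qed.

Lemma wordlen_schreier_telescope (w : seq 'rV[int]_n) t r :
  (forall x, x \in w -> P x \/ P (- x)) -> t \in S -> r \in S ->
  in_span gam (t + \sum_(x <- w) x - r) ->
  wordlen_le schreier_gens (t + \sum_(x <- w) x - r) (size w).
Proof.
case: S_reps => _ S_uniq S_cover.
elim: w t => [|x w IHw] t Pw St Sr.
  by rewrite big_nil addr0 => /S_uniq ->; rewrite ?subrr; first exact: wordlen_le0.
have [t' St' sp_t'] := S_cover (t + x).
have split_sum : t + \sum_(y <- x :: w) y - r = (t + x - t') + (t' + \sum_(y <- w) y - r).
  by rewrite big_cons !addrA subrK.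
rewrite split_sum -[size _]add1n => sp; apply: wordlen_leD.
  by apply: wordlen_schreier_letter => //; apply: Pw; rewrite mem_head.
apply: IHw => //; first by move=> y wy; apply: Pw; rewrite inE wy orbT.
by have := in_spanB sp sp_t'; rewrite addrC addKr.
Qed.

Lemma wordlen_le_schreier_gen v :
  (forall s, s \in S -> wordlen_le P s (size S)) ->
  schreier_gens v -> wordlen_le P v (2 * size S + 1).
Proof.
move=> S_short [si [sj [sig [[Ssi Ssj Psig ->] _]]]].
rewrite mul2n -addnn addnAC; apply: wordlen_leD; first apply: wordlen_leD.
- exact: S_short.
- by apply: wordlen_le1; left.
- exact/wordlen_leN/S_short.
Qed.

End Schreier.

Theorem lemma2p2 (R : realType) (X : Type) (d : X -> X -> R) (n : nat)
    (act : 'rV[int]_n -> X -> X) (x0 : X) (D : R)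
    (gam : 'I_n -> 'rV[int]_n) (S : seq 'rV[int]_n) :
  length_space d ->
  isometric_action d act ->
  free_action act ->
  properly_discontinuous d act ->
  cocompact d act ->
  quotient_diam_le d act D ->
  let SigmaD := fun g : 'rV[int]_n => g != 0 /\ d (act g x0) x0 <= 3 * D in
  (forall i, SigmaD (gam i)) ->
  lin_indep gam ->
  coset_reps gam S ->
  0 \in S ->
  (forall s, s \in S -> forall g, in_span gam (g - s) ->
     forall k, wordlen_le SigmaD g k -> wordlen_le SigmaD s k) ->
  let SigmaHat := fun v : 'rV[int]_n =>
    exists si, exists sj, exists sig,
      [/\ si \in S, sj \in S, SigmaD sig & v = si + sig - sj] /\
      (in_span gam v /\ v != 0) in
  forall g, in_span gam g ->
    (forall k, wordlen_le SigmaD g k -> wordlen_le SigmaHat g k) /\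
    (forall k, wordlen_le SigmaHat g k ->
       wordlen_le SigmaD g ((2 * size S + 1) * k)%N).
Proof.
move=> d_length act_isom act_free _ _ diamD SigmaD gam_SigmaD _ S_reps S0 S_min
  SigmaHat g g_span.
split=> k.
  move=> [w [size_w Pw sum_w]]; apply: wordlen_leW size_w _.
  have := wordlen_schreier_telescope S_reps Pw S0 S0.
  by rewrite add0r subr0 sum_w; apply.
have SigmaD_gen s : exists k, wordlen_le SigmaD s k.
  have [n0|n_gt0] := posnP n.
    by subst n; exists 0%N; rewrite (thinmx0 s); apply: wordlen_le0.
  have D_gt0 := sigmaD_gt0 d_length.1 act_free (gam_SigmaD (Ordinal n_gt0)).
  exact: (sigmaD_generates x0 d_length act_isom diamD D_gt0 s).
apply: wordlen_le_comp => v; apply: wordlen_le_schreier_gen => s Ss.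
have [k' s_k'] := SigmaD_gen s.
exact: wordlen_le_size_coset_rep Ss (S_min s Ss) s_k'.
Qed.
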